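(* Let $a,c\in\mathbb{Z}$, $k,m,n\in\mathbb{N}$ with $km>n\ge1$, $t=\gcd(n,k)$, $n=n_1t$, $k=k_1t$, and $u_1,u_2\in\mathbb{Z}$ with $ku_1+nu_2=t$. Let $p$ be a prime with $p\nmid ackm(km-n)$ and $p\mid(\mathcal{C}-\mathcal{E})$. Let $\alpha_1,\alpha_2\in\mathbb{Z}$ satisfy $(km-n)\alpha_1\equiv nc\pmod{p^2}$ and $a(km-n)^m\alpha_2\equiv(kmc)^m\pmod{p^2}$, and let $\alpha\in\mathbb{Z}$ with $\alpha\equiv\alpha_1^{u_1}\alpha_2^{u_2}\pmod{p^2}$. Then $(\alpha^{k_1}+c)^m-a\alpha^{n_1}\equiv0\pmod{p^2}$ if and only if $\alpha_1^{n_1}\equiv\alpha_2^{k_1}\pmod{p^2}$.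
   Context: $\mathcal{C}=(km)^{k_1m}c^{k_1m-n_1}$, $\mathcal{E}=a^{k_1}n^{n_1}(km-n)^{k_1m-n_1}$. Since $\alpha_1,\alpha_2$ are units modulo $p^2$, negative powers are taken in $(\mathbb{Z}/p^2\mathbb{Z})^\times$. *)

From HB Require Import structures.
From mathcomp Require Import all_boot all_order all_algebra.
Set Implicit Arguments. Unset Strict Implicit. Unset Printing Implicit Defensive.

(* Work in Z/p^2.  The two congruences defining alpha_1 and alpha_2 give
   E alpha_2^k1 = C alpha_1^n1, so the ratio d = alpha_1^n1 / alpha_2^k1
   satisfies C (d - 1) = -(C - E), which is divisible by p: hence (d - 1)^2 = 0
   and d = 1 + e is a first-order perturbation of 1.  Since k1 u1 + n1 u2 = 1,
   alpha^k1 = alpha_1 d^(-u2) and alpha^n1 = alpha_2 d^u1, while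
   (alpha_1 + c)^m = a alpha_2.  Expanding to first order in e, the value
   (alpha^k1 + c)^m - a alpha^n1 is e times a unit (a alpha_2 m c t, up to the
   unit factor (alpha_1 + c) (km - n)), so it vanishes iff e = 0, i.e. iff
   alpha_1^n1 = alpha_2^k1. *)

From HB Require Import structures.
From mathcomp Require Import all_boot all_order all_algebra.
From mathcomp Require Import zify ring.
Set Implicit Arguments. Unset Strict Implicit. Unset Printing Implicit Defensive.
Import Order.TTheory GRing.Theory Num.Theory.
Local Open Scope ring_scope.

Section SquareZero.
Variable R : comUnitRingType.
Implicit Types (e u x y X Y : R).

Lemma exprz_1add_sqr0 e (z : int) : e * e = 0 -> (1 + e) ^ z = 1 + e * z%:~R.
Proof.
move=> e2.
have expr_add1 (j : nat) : (1 + e) ^+ j = 1 + e * j%:R.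
  elim: j => [|j IHj]; first by rewrite expr0 mulr0 addr0.
  rewrite exprS IHj -natr1.
  have -> : (1 + e) * (1 + e * j%:R) = 1 + e * (j%:R + 1) + e * e * j%:R by ring.
  by rewrite e2 mul0r addr0.
case: z => j; first by rewrite -exprnP expr_add1.
rewrite NegzE -invr_expz -exprnP expr_add1; apply: mulr1_eq; rewrite rmorphN /=.
have -> : (1 + e * j.+1%:R) * (1 + e * - j.+1%:R) = 1 - e * e * j.+1%:R ^+ 2 by ring.
by rewrite e2 mul0r subr0.
Qed.

(* Multiplied by [X] so that no [X ^+ m.-1] appears. *)
Lemma exprD_sqr0 e X Y (m : nat) : e * e = 0 ->
  (X + e * Y) ^+ m * X = X ^+ m * (X + e * Y * m%:R).
Proof.
move=> e2; elim: m => [|m IHm]; first by rewrite !expr0 !mul1r mulr0 addr0.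
rewrite exprSr -mulrA [_ * X]mulrC mulrA IHm -natr1 exprSr.
have -> : X ^+ m * (X + e * Y * m%:R) * (X + e * Y) =
  X ^+ m * X * (X + e * Y * (m%:R + 1)) + e * e * (Y * Y * m%:R * X ^+ m) by ring.
by rewrite e2 mul0r addr0.
Qed.

Lemma unitrB_sqr0 u x : u \is a GRing.unit -> x * x = 0 -> u - x \is a GRing.unit.
Proof.
move=> uu x2; apply/unitrP; exists (u^-1 * (1 + x / u)).
have : u * u^-1 = 1 by rewrite divrr.
move: (u^-1) => v uv.
have inv : (u - x) * (v * (1 + x * v)) = 1.
  have -> : (u - x) * (v * (1 + x * v)) = u * v * (1 + x * v) - x * v - x * x * v * v
    by ring.
  by rewrite uv mul1r addrK x2 !mul0r subr0.
by split=> //; rewrite mulrC.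
Qed.

Lemma sqr0_mulKr u x y : u \is a GRing.unit -> u * y = x -> x * x = 0 -> y * y = 0.
Proof.
move=> uu uyx x2; have uu2 : u * u \is a GRing.unit by rewrite unitrM uu.
apply: (mulIr uu2); rewrite mul0r -x2 -uyx; ring.
Qed.

End SquareZero.

Section CongruenceEquation.
Variable R : comUnitRingType.
Variables (a c k n N t A1 A2 x : R) (m k1 n1 : nat) (u1 u2 : int).

Hypotheses (ua : a \is a GRing.unit) (uc : c \is a GRing.unit)
  (uk : k \is a GRing.unit) (um : (m%:R : R) \is a GRing.unit)
  (uN : N \is a GRing.unit).
Hypothesis defN : N + n = k * m%:R.
Hypothesis eqA1 : N * A1 = n * c.
Hypothesis eqA2 : a * N ^+ m * A2 = (k * m%:R * c) ^+ m.

Lemma exprA1c : (A1 + c) ^+ m = a * A2.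
Proof.
have NX : N * (A1 + c) = k * m%:R * c by rewrite mulrDr eqA1 -mulrDl addrC defN.
apply: (mulrI (unitrX m uN)); rewrite -exprMn NX -eqA2; ring.
Qed.

Local Notation C := ((k * m%:R) ^+ (k1 * m)%N * c ^+ (k1 * m - n1)%N).
Local Notation E := (a ^+ k1 * n ^+ n1 * N ^+ (k1 * m - n1)%N).
Hypotheses (le_n1_k1m : (n1 <= k1 * m)%N) (n1_gt0 : (0 < n1)%N).
Hypotheses (defCE : C - E = x) (x2 : x * x = 0).

Lemma CE_relation : E * A2 ^+ k1 = C * A1 ^+ n1.
Proof.
apply: (mulIr (unitrX n1 uN)).
have eN : N ^+ (k1 * m) = N ^+ (k1 * m - n1) * N ^+ n1 by rewrite -exprD subnK.
have ec : c ^+ (k1 * m) = c ^+ (k1 * m - n1) * c ^+ n1 by rewrite -exprD subnK.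
have -> : E * A2 ^+ k1 * N ^+ n1 = n ^+ n1 * (a * N ^+ m * A2) ^+ k1.
  by rewrite !exprMn -exprM [(m * k1)%N]mulnC eN; ring.
have -> : C * A1 ^+ n1 * N ^+ n1 = C * (N * A1) ^+ n1.
  by rewrite [(N * A1) ^+ _]exprMn -mulrA [_ * N ^+ n1]mulrC.
rewrite eqA1 eqA2 !exprMn -!exprM [(m * k1)%N]mulnC ec.
by move: (k1 * m - n1)%N (k1 * m)%N => i j; ring.
Qed.

Lemma unitr_C : C \is a GRing.unit.
Proof. by rewrite unitrM !unitrX // unitrM uk. Qed.

Lemma unitr_n : n \is a GRing.unit.
Proof.
have defE : E = C - x by rewrite -defCE opprB addrC subrK.
have := unitrB_sqr0 unitr_C x2.
by rewrite -defE !unitrM (unitrX_pos _ n1_gt0) => /andP[/andP[_ ->]].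
Qed.

Lemma unitr_A1 : A1 \is a GRing.unit.
Proof.
have : N * A1 \is a GRing.unit by rewrite eqA1 unitrM unitr_n uc.
by rewrite unitrM => /andP[].
Qed.

Lemma unitr_A2 : A2 \is a GRing.unit.
Proof.
have : a * N ^+ m * A2 \is a GRing.unit by rewrite eqA2 unitrX // !unitrM uk um uc.
by rewrite unitrM => /andP[].
Qed.

Local Notation d := (A1 ^+ n1 / A2 ^+ k1).

Lemma ratio_sub1_sqr0 : (d - 1) * (d - 1) = 0.
Proof.
apply: (sqr0_mulKr unitr_C _ (_ : - x * - x = 0)); last by rewrite mulrNN.
rewrite mulrBr mulr1 mulrA -CE_relation mulrK ?unitrX ?unitr_A2 //.
by rewrite -defCE opprB.
Qed.

Hypothesis bezout1 : k1%:Z * u1 + n1%:Z * u2 = 1.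
Local Notation alpha := (A1 ^ u1 * A2 ^ u2).

Lemma exprz_ratio (z : int) : d ^ z = A1 ^ (n1%:Z * z) * A2 ^ (- (k1%:Z * z)).
Proof.
rewrite exprMz_comm ?unitrV ?unitrX ?unitr_A1 ?unitr_A2 //; last exact: mulrC.
by rewrite exprz_inv !exprnP !exprz_exp mulrN.
Qed.

Lemma alpha_exp_k1 : alpha ^+ k1 = A1 * d ^ (- u2).
Proof.
rewrite exprMn exprz_ratio !exprnP !exprz_exp mulrA -{2}(expr1z A1).
by rewrite -exprzDr ?unitr_A1 //; congr (A1 ^ _ * A2 ^ _); lia.
Qed.

Lemma alpha_exp_n1 : alpha ^+ n1 = A2 * d ^ u1.
Proof.
rewrite exprMn exprz_ratio !exprnP !exprz_exp mulrCA -{2}(expr1z A2).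
by rewrite -exprzDr ?unitr_A2 //; congr (A1 ^ _ * A2 ^ _); lia.
Qed.

Hypotheses (ut : t \is a GRing.unit) (bezout : k * u1%:~R + n * u2%:~R = t).

(* Writing the ratio [d] as [1 + e], the polynomial at [alpha] is linear in
   [e] with a unit slope. *)
Lemma value_mul_sqr0 (e : R) : e * e = 0 ->
  ((A1 * (1 + e * (- u2)%:~R) + c) ^+ m - a * (A2 * (1 + e * u1%:~R))) * ((A1 + c) * N)
  = - (e * (a * A2 * m%:R * c * t)).
Proof.
move=> e2; set X := A1 + c.
have NX : N * X = k * m%:R * c by rewrite mulrDr eqA1 -mulrDl addrC defN.
have -> : A1 * (1 + e * (- u2)%:~R) + c = X + e * (A1 * - u2%:~R) by rewrite /X mulrNz; ring.
have -> : ((X + e * (A1 * - u2%:~R)) ^+ m - a * (A2 * (1 + e * u1%:~R))) * (X * N)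
   = (X + e * (A1 * - u2%:~R)) ^+ m * X * N - a * A2 * (1 + e * u1%:~R) * (N * X) by ring.
rewrite exprD_sqr0 // exprA1c NX -bezout.
have -> : a * A2 * (X + e * (A1 * - u2%:~R) * m%:R) * N =
   a * A2 * (N * X) + a * A2 * e * m%:R * (- u2%:~R) * (N * A1) by ring.
rewrite NX eqA1; ring.
Qed.

Lemma equation_iff :
  (alpha ^+ k1 + c) ^+ m - a * alpha ^+ n1 = 0 <-> A1 ^+ n1 = A2 ^+ k1.
Proof.
have uA2k1 : A2 ^+ k1 \is a GRing.unit by rewrite unitrX ?unitr_A2.
have uK : a * A2 * m%:R * c * t \is a GRing.unit.
  by rewrite !unitrM ua unitr_A2 um uc ut.
set e := d - 1; have e2 : e * e = 0 := ratio_sub1_sqr0.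
have de : d = 1 + e by rewrite /e addrC subrK.
have -> : A1 ^+ n1 = A2 ^+ k1 <-> e = 0.
  split=> [h | e0]; first by rewrite /e h divrr // subrr.
  by rewrite -(divrK uA2k1 (A1 ^+ n1)) de e0 addr0 mul1r.
rewrite alpha_exp_k1 alpha_exp_n1 de !exprz_1add_sqr0 //.
split=> [h0 | ->]; last by rewrite !mul0r !addr0 !mulr1 exprA1c subrr.
have := value_mul_sqr0 e2; rewrite h0 mul0r => /eqP; rewrite eq_sym oppr_eq0 => /eqP eK.
by apply: (mulIr uK); rewrite eK mul0r.
Qed.

End CongruenceEquation.

Lemma Zp_nat_eq0 (q n : nat) : (1 < q)%N -> ((n%:R : 'Z_q) == 0) = (q %| n)%N.
Proof. by move=> q_gt1; rewrite -val_eqE /= val_Zp_nat. Qed.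

Lemma Zp_intr_eq0 (q : nat) (z : int) : (1 < q)%N -> ((z%:~R : 'Z_q) == 0) = (q%:Z %| z)%Z.
Proof.
move=> q_gt1; case: z => j; first exact: Zp_nat_eq0.
by rewrite NegzE rmorphN oppr_eq0 Zp_nat_eq0.
Qed.

Lemma eqZp_mod (q : nat) (y z : int) : (1 < q)%N ->
  (y == z %[mod q%:Z])%Z = ((y%:~R : 'Z_q) == z%:~R).
Proof. by move=> q_gt1; rewrite eqz_mod_dvd -Zp_intr_eq0 // rmorphB subr_eq0. Qed.

Section ModPrimeSquare.
Variable p : nat.
Hypothesis p_pr : prime p.

Lemma prime_sqr_gt1 : (1 < p ^ 2)%N.
Proof. by rewrite (ltn_exp2l 0) // prime_gt1. Qed.

Lemma unitZp_sqr (z : int) : ~~ (p%:Z %| z)%Z -> (z%:~R : 'Z_(p ^ 2)) \is a GRing.unit.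
Proof.
have unit_nat (j : nat) : ~~ (p %| j)%N -> (j%:R : 'Z_(p ^ 2)) \is a GRing.unit.
  by move=> pNj; rewrite unitZpE ?prime_sqr_gt1 // coprime_pexpl // prime_coprime.
by case: z => j; [exact: unit_nat | rewrite NegzE rmorphN unitrN; exact: unit_nat].
Qed.

Lemma Zp_sqr0 (z : int) : (p%:Z %| z)%Z -> (z%:~R : 'Z_(p ^ 2)) * z%:~R = 0.
Proof.
case/dvdzP=> w ->; rewrite rmorphM /= -[p%:Z%:~R]/(p%:R).
have pp0 : (p%:R : 'Z_(p ^ 2)) * p%:R = 0 by rewrite -natrM mulnn pchar_Zp ?prime_sqr_gt1.
by rewrite mulrACA pp0 mulr0.
Qed.

End ModPrimeSquare.

Lemma bezout_divn (k n t k1 n1 : nat) (u1 u2 : int) : (0 < t)%N ->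
  n = (n1 * t)%N -> k = (k1 * t)%N -> k%:Z * u1 + n%:Z * u2 = t%:Z ->
  k1%:Z * u1 + n1%:Z * u2 = 1.
Proof. by move=> t_gt0 -> ->; rewrite !PoszM; nia. Qed.

Theorem mainTheorem14
  (a c : int) (k m n t n1 k1 : nat) (u1 u2 : int) (p : nat)
  (alpha1 alpha2 alpha : int) :
  (n < k * m)%N -> (1 <= n)%N ->
  t = gcdn n k -> n = (n1 * t)%N -> k = (k1 * t)%N ->
  k%:Z * u1 + n%:Z * u2 = t%:Z ->
  prime p ->
  ~~ (p%:Z %| a * c * k%:Z * m%:Z * ((k * m)%:Z - n%:Z))%Z ->
  (p%:Z %| ((k * m)%:Z ^+ (k1 * m) * c ^+ (k1 * m - n1)
            - a ^+ k1 * n%:Z ^+ n1 * ((k * m)%:Z - n%:Z) ^+ (k1 * m - n1)))%Z ->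
  (((k * m)%:Z - n%:Z) * alpha1 == n%:Z * c %[mod (p ^ 2)%:Z])%Z ->
  (a * ((k * m)%:Z - n%:Z) ^+ m * alpha2 == ((k * m)%:Z * c) ^+ m
     %[mod (p ^ 2)%:Z])%Z ->
  (alpha%:~R : 'Z_(p ^ 2)) = (alpha1%:~R : 'Z_(p ^ 2)) ^ u1 * (alpha2%:~R : 'Z_(p ^ 2)) ^ u2 ->
  ((alpha ^+ k1 + c) ^+ m - a * alpha ^+ n1 == 0 %[mod (p ^ 2)%:Z])%Z
  <-> (alpha1 ^+ n1 == alpha2 ^+ k1 %[mod (p ^ 2)%:Z])%Z.
Proof.
move=> lt_n_km n_gt0 def_t def_n def_k bezout p_pr pNac pCE eqA1 eqA2 def_alpha.
have t_gt0 : (0 < t)%N by rewrite def_t gcdn_gt0 n_gt0.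
have n1_gt0 : (0 < n1)%N by move: n_gt0; rewrite def_n muln_gt0 => /andP[].
have le_n1_k1m : (n1 <= k1 * m)%N.
  by move: lt_n_km; rewrite def_n def_k mulnAC ltn_pmul2r // => /ltnW.
have bezout1 := bezout_divn t_gt0 def_n def_k bezout.
have q_gt1 := prime_sqr_gt1 p_pr.
have /(Zp_sqr0 p_pr) x2 := pCE.
have := unitZp_sqr p_pr pNac.
rewrite !rmorphM /= !unitrM => /andP[/andP[/andP[/andP[ua uc] uk] um] uN].
have ut : (t%:~R : 'Z_(p ^ 2)) \is a GRing.unit.
  by move: uk; rewrite def_k PoszM rmorphM unitrM => /andP[].
rewrite !eqZp_mod // in eqA1 eqA2 *; move/eqP: eqA1; move/eqP: eqA2.
rewrite !(rmorphM, rmorphXn) /= => eqA2 eqA1.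
have defN : ((k * m)%:Z - n%:Z)%:~R + n%:~R = k%:~R * m%:~R :> 'Z_(p ^ 2).
  by rewrite rmorphB /= subrK PoszM rmorphM.
have bezoutR : k%:~R * u1%:~R + n%:~R * u2%:~R = t%:~R :> 'Z_(p ^ 2).
  by rewrite -!rmorphM -rmorphD /= bezout.
(* Expanding one side of a reflexivity identifies C - E computed in Z/p^2
   with the image of the integer C - E. *)
have defCE := erefl (((k * m)%:Z ^+ (k1 * m) * c ^+ (k1 * m - n1)
  - a ^+ k1 * n%:Z ^+ n1 * ((k * m)%:Z - n%:Z) ^+ (k1 * m - n1))%:~R : 'Z_(p ^ 2)).
rewrite {1}rmorphB /= !rmorphM !rmorphXn /= rmorphM /= in defCE.
have := equation_iff ua uc uk um uN defN eqA1 eqA2 le_n1_k1m n1_gt0 defCE x2 bezout1 ut bezoutR.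
rewrite -def_alpha rmorph0 rmorphB rmorphM !rmorphXn rmorphD /= !rmorphXn.
by move=> equation_iffZp; split=> /eqP/equation_iffZp/eqP.
Qed.
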